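(* Let $\mathcal{G}=(V,L)$ be a finite connected undirected graph with monitor set $M$ and non-monitor set $N=V\setminus M$, $\sigma=|N|$, let $S\subseteq N$ be nonempty, let $m\in M$, and let $q$ be an integer with $0\le q\le\sigma-1$. The following are equivalent: (1) for every set $V'$ consisting of $m$ together with at most $q$ non-monitors, each connected component of $\mathcal{G}-V'$ that contains a node of $S$ also contains a monitor; (2) $\Gamma_{\mathcal{G}_m}(S,m')\ge q+1$.
   Context: $\mathcal{G}-V'$ denotes deletion of the nodes of $V'$ and incident links. For $M'\subseteq M$, $\mathcal{N}(M')$ is the set of non-monitors adjacent to at least one monitor of $M'$. $\mathcal{G}_m$ is obtained from $\mathcal{G}$ by deleting all monitors, adding a virtual node $m'$, and linking $m'$ to every node of $\mathcal{N}(M\setminus\{m\})$. For nodes $s,t$ of a graph $\mathcal{H}$, $C_{\mathcal{H}}(s,t)$ is a minimum-cardinality set of nodes (other than $s,t$) whose deletion destroys all $s$–$t$ paths; if $s,t$ are adjacent, $C_{\mathcal{H}}(s,t):=V(\mathcal{H})\setminus\{t\}$. $\Gamma_{\mathcal{H}}(S,m'):=\min_{w\in S}|C_{\mathcal{H}}(w,m')|$. *)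

From mathcomp Require Import all_boot.
Set Implicit Arguments. Unset Strict Implicit. Unset Printing Implicit Defensive.

(* A finite simple undirected graph is a symmetric irreflexive e : rel T on a finType T.
   Subgraphs are given by a vertex set W : {set T} (induced subgraph). *)

Definition restr (T : finType) (e : rel T) (A : {set T}) : rel T :=
  [rel x y | [&& e x y, x \in A & y \in A]].

Definition separates (T : finType) (e : rel T) (W : {set T}) (s t : T) (X : {set T}) : bool :=
  (X \subset W :\: [set s; t]) && ~~ connect (restr e (W :\: X)) s t.

Definition cut_size (T : finType) (e : rel T) (W : {set T}) (s t : T) : nat :=
  if e s t then #|W :\ t|
  else \big[minn/#|W|]_(X : {set T} | separates e W s t X) #|X|.

Definition Gamma (T : finType) (e : rel T) (W : {set T}) (S : {set T}) (t : T) : nat :=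
  \big[minn/#|W|]_(w in S) cut_size e W w t.

Definition nbr_nonmon (V : finType) (e : rel V) (M M' : {set V}) : {set V} :=
  [set y in ~: M | [exists u in M', e u y]].

(* G_m : vertices = non-monitors (Some x) plus the virtual node m' (None) *)
Definition Gm_vertices (V : finType) (M : {set V}) : {set option V} :=
  None |: [set Some x | x in ~: M].

Definition Gm_edge (V : finType) (e : rel V) (M : {set V}) (m : V) : rel (option V) :=
  fun a b => match a, b with
  | Some x, Some y => e x y
  | None, Some y => y \in nbr_nonmon e M (M :\ m)
  | Some x, None => x \in nbr_nonmon e M (M :\ m)
  | None, None => false
  end.

(* Removing m and a set U of non-monitors, a node s of S reaches a monitor
   u <> m in G iff Some s reaches m' in G_m - U: the last non-monitor before
   the first monitor on such a path lies in N(M \ {m}), i.e. is linked to m'.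
   As the s-m' separators of G_m are exactly the images of such sets U, (1)
   says that every separator has more than q nodes, which is (2); the bound
   q <= sigma - 1 makes the adjacent case |C| = sigma and the default value
   sigma + 1 of the minima irrelevant. *)

From mathcomp Require Import all_boot all_order.
Import Order.TTheory.

Set Implicit Arguments.
Unset Strict Implicit.
Unset Printing Implicit Defensive.

Lemma bigminn_gtP (I : finType) (P : pred I) (F : I -> nat) d q :
  reflect (q < d /\ forall i, P i -> q < F i) (q < \big[minn/d]_(i | P i) F i).
Proof. by rewrite -minEnat; exact: (@bigmin_gtP _ nat I d q P F). Qed.

Lemma Gamma_gtP (T : finType) (e : rel T) (W S : {set T}) t q : q < #|W| ->
  reflect (forall w, w \in S -> q < cut_size e W w t) (q < Gamma e W S t).
Proof.
by rewrite /Gamma => ltqW; apply: (iffP (bigminn_gtP _ _ _ _)) => [[]|].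
Qed.

Lemma cut_size_gtP (T : finType) (e : rel T) (W : {set T}) s t q :
  s \in W -> t \in W -> q < #|W :\ t| ->
  reflect (forall X : {set T}, X \subset W :\: [set s; t] -> #|X| <= q ->
             connect (restr e (W :\: X)) s t)
          (q < cut_size e W s t).
Proof.
move=> sW tW ltqW; rewrite /cut_size; case: ifPn => [est|nest].
  rewrite ltqW; constructor=> X /subsetP sXW _; apply: connect1.
  have notX y : y \in [set s; t] -> y \notin X.
    by move=> yst; apply/negP=> /sXW; rewrite inE yst.
  by rewrite /restr /= est !inE notX ?notX ?set21 ?set22 ?sW.
have ltqW' : q < #|W| by apply: leq_trans ltqW (subset_leq_card (subD1set _ _)).
apply: (iffP (bigminn_gtP _ _ _ _)) => [[_ ltqX] X sXW leXq | conn].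
  apply/negPn/negP=> nst.
  by have := ltqX X; rewrite /separates sXW nst ltnNge leXq => /(_ isT).
split=> // X /andP[sXW nst].
by rewrite ltnNge; apply: contraNN nst => /(conn X sXW).
Qed.

Section MonitorGraph.
Variables (V : finType) (e : rel V) (M : {set V}) (m : V).
Hypotheses (e_sym : symmetric e) (hm : m \in M).

Local Notation Gm := (Gm_edge e M m).
Local Notation Wm := (Gm_vertices M).

Lemma mem_Gm_vertices x : (Some x \in Wm) = (x \notin M).
Proof. by rewrite !inE (mem_imset _ _ (@Some_inj _)) inE. Qed.

Lemma None_Gm_vertices : None \in Wm.
Proof. by rewrite !inE. Qed.

Lemma card_Gm_vertices : #|Wm :\ None| = #|~: M|.
Proof.
rewrite /Gm_vertices setU1K; first exact/card_imset/Some_inj.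
by apply/imsetP=> -[].
Qed.

Lemma nonmonitor_in_setU1 (U : {set V}) x : x \notin M -> (x \in m |: U) = (x \in U).
Proof. by move=> xM; rewrite in_setU1; case: eqP => // xm; rewrite xm hm in xM. Qed.

Lemma mem_Gm_del (U : {set V}) x :
  (Some x \in Wm :\: Some @: U) = (x \notin M) && (x \notin U).
Proof. by rewrite in_setD mem_Gm_vertices (mem_imset _ _ (@Some_inj _)) andbC. Qed.

Lemma None_Gm_del (U : {set V}) : None \in Wm :\: Some @: U.
Proof. by rewrite in_setD None_Gm_vertices andbT; apply/imsetP=> -[]. Qed.

Lemma Gm_edge_None x : Gm (Some x) None = (x \notin M) && [exists u in M :\ m, e u x].
Proof. by rewrite /= /nbr_nonmon !inE. Qed.

Lemma subset_Gm_cutP (X : {set option V}) s : s \notin M ->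
  reflect (exists2 U : {set V}, X = Some @: U & (U \subset ~: M) && (s \notin U))
          (X \subset Wm :\: [set Some s; None]).
Proof.
move=> sM.
apply: (iffP subsetP) => [sXW | [U -> /andP[/subsetP UM sU]] _ /imsetP[x xU ->]].
  have NX : None \notin X by apply/negP=> /sXW; rewrite !inE eqxx orbT.
  exists (Some @^-1: X).
    apply/setP=> -[x|]; last by rewrite (negbTE NX); apply/esym/imsetP=> -[].
    by rewrite (mem_imset _ _ (@Some_inj _)) inE.
  apply/andP; split; last by apply/negP; rewrite inE => /sXW; rewrite !inE eqxx.
  by apply/subsetP=> x; rewrite !inE => /sXW; rewrite in_setD mem_Gm_vertices => /andP[].
have /[!in_setC] xM := UM x xU.
rewrite in_setD mem_Gm_vertices xM andbT !inE (inj_eq (@Some_inj _)).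
by rewrite orbF; apply: contraNneq sU => <-.
Qed.

Lemma Gm_connect_of_monitor (U : {set V}) x u :
  x \notin M -> x \in ~: (m |: U) -> u \in M :\: (m |: U) ->
  connect (restr e (~: (m |: U))) x u ->
  connect (restr Gm (Wm :\: Some @: U)) (Some x) None.
Proof.
move=> + + uM /connectP[p]; elim: p x => [|y p IH] x xM xA /=.
  by move=> _ ux; rewrite ux !inE (negbTE xM) andbF in uM.
have memA z : z \notin M -> z \in ~: (m |: U) -> Some z \in Wm :\: Some @: U.
  by move=> zM; rewrite mem_Gm_del zM in_setC nonmonitor_in_setU1.
case/andP=> /and3P[exy _ yA] yp uy.
have [yM | yM] := boolP (y \in M); last first.
  by apply: connect_trans (IH y yM yA yp uy); apply: connect1; rewrite /restr /= exy !memA.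
apply: connect1; apply/and3P; split; rewrite ?memA ?None_Gm_del //.
rewrite Gm_edge_None xM; apply/existsP; exists y; rewrite e_sym exy andbT !inE yM andbT.
by move: yA; rewrite !inE negb_or => /andP[].
Qed.

Lemma monitor_of_Gm_connect (U : {set V}) x : U \subset ~: M ->
  connect (restr Gm (Wm :\: Some @: U)) (Some x) None ->
  exists2 u, u \in M :\: (m |: U) & connect (restr e (~: (m |: U))) x u.
Proof.
move=> /subsetP UM /connectP[p].
have memA z : Some z \in Wm :\: Some @: U -> z \in ~: (m |: U).
  by rewrite mem_Gm_del in_setC => /andP[zM zU]; rewrite nonmonitor_in_setU1.
elim: p x => [|[y|] p IH] x //=.
  case/andP=> /and3P[exy xW yW] yp Ny; have [u uM yu] := IH y yp Ny.
  exists u => //; apply: connect_trans yu; apply: connect1.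
  by apply/and3P; split; [exact: exy | exact: memA | exact: memA].
case/andP=> /and3P[+ xW _ _ _]; rewrite Gm_edge_None => /andP[_ /existsP[u /andP[uM eux]]].
have uU : u \notin U by apply/negP=> /UM; move: uM; rewrite !inE => /andP[_ ->].
have uA : u \in ~: (m |: U) by move: uM; rewrite !inE negb_or uU andbT => /andP[].
exists u; first by move: uA uM; rewrite !inE => -> /andP[_ ->].
by apply: connect1; apply/and3P; split; [rewrite e_sym | exact: memA | exact: uA].
Qed.

Lemma cut_size_Gm_gtP q s : s \notin M -> q < #|~: M| ->
  reflect (forall U : {set V}, U \subset ~: M -> #|U| <= q -> s \notin m |: U ->
             exists2 u, u \in M :\: (m |: U) & connect (restr e (~: (m |: U))) s u)
          (q < cut_size Gm Wm (Some s) None).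
Proof.
move=> sM ltqN; have sW : Some s \in Wm by rewrite mem_Gm_vertices.
have ltqW : q < #|Wm :\ None| by rewrite card_Gm_vertices.
apply: (iffP (cut_size_gtP Gm sW None_Gm_vertices ltqW)) => [conn U UM leUq sU | conn X].
  apply: monitor_of_Gm_connect => //; apply: conn; last first.
    by rewrite card_imset //; exact: Some_inj.
  by apply/subset_Gm_cutP => //; exists U; rewrite // UM -(nonmonitor_in_setU1 _ sM).
case/subset_Gm_cutP=> // U -> /andP[UM sU]; rewrite card_imset; last exact: Some_inj.
move=> leUq; have sU' : s \notin m |: U by rewrite nonmonitor_in_setU1.
have [u uM su] := conn U UM leUq sU'.
by apply: Gm_connect_of_monitor su; rewrite ?in_setC.
Qed.
End MonitorGraph.

Theorem lemma6 (V : finType) (e : rel V)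
  (e_sym : symmetric e) (e_irr : irreflexive e)
  (e_conn : forall x y : V, connect e x y)
  (M S : {set V}) (m : V) (q : nat)
  (hS : S \subset ~: M) (hS0 : S != set0) (hm : m \in M)
  (hq : q <= #|~: M| - 1) :
  (forall U : {set V}, U \subset ~: M -> #|U| <= q ->
     forall s, s \in S -> s \notin m |: U ->
       exists2 u, u \in M :\: (m |: U) &
         connect (restr e (~: (m |: U))) s u)
  <->
  q.+1 <= Gamma (Gm_edge e M m) (Gm_vertices M) [set Some x | x in S] None.
Proof.
have sN s : s \in S -> s \notin M by move/(subsetP hS); rewrite inE.
have ltqN : q < #|~: M|.
  have [s0 s0S] := set0Pn _ hS0.
  have /prednK <- : 0 < #|~: M| by apply/card_gt0P; exists s0; exact: subsetP hS s0 s0S.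
  by rewrite ltnS -subn1.
have ltqW : q < #|Gm_vertices M|.
  by rewrite -(card_Gm_vertices M) in ltqN; exact: leq_trans ltqN (subset_leq_card (subD1set _ _)).
split=> [conn | /(Gamma_gtP _ _ _ ltqW) cut U UM leUq s sS].
  apply/(Gamma_gtP _ _ _ ltqW) => _ /imsetP[s sS ->].
  by apply/(cut_size_Gm_gtP e_sym hm (sN s sS) ltqN) => U UM leUq; apply: conn.
by apply/(cut_size_Gm_gtP e_sym hm (sN s sS) ltqN): U UM leUq; exact/cut/imset_f.
Qed.
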